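(* Let $\epsilon>0$ and let $\mathcal{P}^\epsilon$ be the strategy \[ M_n=\begin{cases}-\epsilon s_{n-1} & \text{if } |s_{i-1}|\le\sqrt{i+2/\epsilon}-1 \text{ for all } i=1,\dots,n,\\ 0&\text{otherwise.}\end{cases} \] Then $\mathcal{P}^\epsilon$ weakly forces the event \[ E_3^\epsilon:=\Bigl\{\xi:\ \exists n\ |s_n|>\sqrt{n+1+2/\epsilon}-1\ \ \text{or}\ \ \bigl(\limsup_{n\to\infty}|s_n|=\infty\ \text{and}\ s_n\ne0\ \text{for all but finitely many } n\bigr)\Bigr\}. \]
   Context: Fair-coin game: in rounds $n=1,2,\dots$ Skeptic announces $M_n\in\mathbb{R}$ (depending only on $x_1,\dots,x_{n-1}$), then Reality announces $x_n\in\{-1,1\}$. A path is an infinite sequence $\xi=x_1x_2\cdots\in\{-1,1\}^{\mathbb{N}}$, and $\Omega$ is the set of paths. We write $s_n:=x_1+\cdots+x_n$, with $s_0=0$. The capital process of a strategy with zero initial capital is $\mathcal{K}^{\mathcal{P}}_n=\sum_{k=1}^nM_kx_k$. A strategy $\mathcal{P}$ weakly forces $E\subseteq\Omega$ if $\mathcal{K}^{\mathcal{P}}_n(\xi)\ge-1$ for all $\xi\in\Omega$ and $n\ge0$, and $\limsup_n\mathcal{K}^{\mathcal{P}}_n(\xi)=\infty$ for every $\xi\notin E$. Skeptic can weakly force $E$ if some strategy does. *)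

From Stdlib Require Import Reals Lra ClassicalEpsilon.
Open Scope R_scope.

(* A path xi : nat -> bool; Reality's move in round n (n >= 1) is
   x_n = 1 if xi n = true, -1 otherwise (xi 0 is unused). *)
Definition path := nat -> bool.

Definition x (xi : path) (n : nat) : R := if xi n then 1 else -1.

Fixpoint s (xi : path) (n : nat) : R :=
  match n with
  | O => 0
  | S m => s xi m + x xi (S m)
  end.

(* A strategy: M n xi is Skeptic's move in round n (used for n >= 1). *)
Definition strategy := nat -> path -> R.

Definition predictable (M : strategy) : Prop :=
  forall (n : nat) (xi xi' : path),
    (forall k, (1 <= k <= n - 1)%nat -> xi k = xi' k) -> M n xi = M n xi'.

Fixpoint capital (M : strategy) (xi : path) (n : nat) : R :=
  match n with
  | O => 0
  | S m => capital M xi m + M (S m) xi * x xi (S m)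
  end.

Definition limsup_infty (u : nat -> R) : Prop :=
  forall (C : R) (N : nat), exists n, (N <= n)%nat /\ C < u n.

Definition weakly_forces (M : strategy) (E : path -> Prop) : Prop :=
  predictable M /\
  (forall (xi : path) (n : nat), -1 <= capital M xi n) /\
  (forall xi : path, ~ E xi -> limsup_infty (capital M xi)).

Definition P_eps (eps : R) : strategy :=
  fun n xi =>
    if excluded_middle_informative
         (forall i : nat, (1 <= i <= n)%nat ->
            Rabs (s xi (i - 1)) <= sqrt (INR i + 2 / eps) - 1)
    then - eps * s xi (n - 1)
    else 0.

Definition E3 (eps : R) (xi : path) : Prop :=
  (exists n : nat, Rabs (s xi n) > sqrt (INR n + 1 + 2 / eps) - 1) \/
  (limsup_infty (fun n => Rabs (s xi n)) /\
   exists N : nat, forall n : nat, (N <= n)%nat -> s xi n <> 0).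

From Stdlib Require Import Reals Lra Lia Classical ClassicalEpsilon.
Open Scope R_scope.

(* While the guard of [P_eps] holds, the capital equals
   [eps/2 (n - s_n^2)]: since [s_n^2 = s_(n-1)^2 + 2 s_(n-1) x_n + 1], the bet
   [-eps s_(n-1) x_n] is exactly the increment of this quantity.  The guard
   keeps [s_n^2 <= n + 2/eps], so the capital stays above [-1]; once the guard
   fails the capital is frozen.  If [E3] fails the guard holds forever and
   [|s_n|] is bounded along infinitely many [n] (possibly by [0]), where the
   capital is at least [eps/2 (n - C^2)]. *)

Definition in_play (eps : R) (xi : path) (n : nat) : Prop :=
  forall i : nat, (1 <= i <= n)%nat ->
    Rabs (s xi (i - 1)) <= sqrt (INR i + 2 / eps) - 1.

Definition potential (eps : R) (u : nat -> R) (n : nat) : R :=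
  eps * (INR n - u n ^ 2) / 2.

Lemma Rabs_x xi n : Rabs (x xi n) = 1.
Proof. unfold x; destruct (xi n); [apply Rabs_R1 | rewrite Rabs_left; lra]. Qed.

Lemma x_sq xi n : x xi n ^ 2 = 1.
Proof. unfold x; destruct (xi n); ring. Qed.

Lemma s_ext xi xi' n :
  (forall k, (1 <= k <= n)%nat -> xi k = xi' k) -> s xi n = s xi' n.
Proof.
  induction n as [|n IH]; intros H; simpl; [reflexivity|].
  rewrite IH by (intros; apply H; lia).
  unfold x; rewrite H by lia; reflexivity.
Qed.

Lemma in_play_S eps xi n : in_play eps xi (S n) -> in_play eps xi n.
Proof. intros H i Hi; apply H; lia. Qed.

Lemma P_eps_in_play eps xi n :
  in_play eps xi n -> P_eps eps n xi = - eps * s xi (n - 1).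
Proof.
  intros H; unfold P_eps.
  destruct (excluded_middle_informative _) as [_|C]; [reflexivity|contradiction].
Qed.

Lemma P_eps_out_of_play eps xi n : ~ in_play eps xi n -> P_eps eps n xi = 0.
Proof.
  intros H; unfold P_eps.
  destruct (excluded_middle_informative _) as [A|_]; [contradiction|reflexivity].
Qed.

Lemma P_eps_predictable eps : predictable (P_eps eps).
Proof.
  intros n xi xi' H.
  assert (Hs : forall i, (1 <= i <= n)%nat -> s xi (i - 1) = s xi' (i - 1)).
  { intros i Hi; apply s_ext; intros k Hk; apply H; lia. }
  destruct (classic (in_play eps xi n)) as [A|NA].
  - assert (A' : in_play eps xi' n).
    { intros i Hi; rewrite <- Hs by exact Hi; apply A, Hi. }
    rewrite (P_eps_in_play _ _ _ A), (P_eps_in_play _ _ _ A').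
    destruct n as [|n]; [reflexivity|].
    rewrite (Hs (S n)) by lia; reflexivity.
  - assert (NA' : ~ in_play eps xi' n).
    { intros A'; apply NA; intros i Hi; rewrite Hs by exact Hi; apply A', Hi. }
    rewrite (P_eps_out_of_play _ _ _ NA), (P_eps_out_of_play _ _ _ NA'); reflexivity.
Qed.

Lemma capital_in_play eps xi n :
  in_play eps xi n -> capital (P_eps eps) xi n = potential eps (s xi) n.
Proof.
  unfold potential; induction n as [|n IH]; intros A; [simpl; lra|].
  simpl capital; rewrite IH by exact (in_play_S _ _ _ A).
  rewrite (P_eps_in_play _ _ _ A), Nat.sub_succ, Nat.sub_0_r.
  simpl s; rewrite S_INR.
  replace ((s xi n + x xi (S n)) ^ 2)
    with (s xi n ^ 2 + 2 * s xi n * x xi (S n) + x xi (S n) ^ 2) by ring.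
  rewrite x_sq; field.
Qed.

Lemma Rabs_s_in_play eps xi n : 0 < eps ->
  in_play eps xi n -> Rabs (s xi n) <= sqrt (INR n + 2 / eps).
Proof.
  intros Heps A; destruct n as [|m].
  - simpl; rewrite Rabs_R0; apply sqrt_pos.
  - assert (Hm := A (S m) ltac:(lia)).
    rewrite Nat.sub_succ, Nat.sub_0_r in Hm.
    simpl s; eapply Rle_trans; [apply Rabs_triang|].
    rewrite Rabs_x; lra.
Qed.

Lemma potential_in_play_ge eps xi n : 0 < eps ->
  in_play eps xi n -> -1 <= potential eps (s xi) n.
Proof.
  intros Heps A; unfold potential.
  assert (H2 : 0 < 2 / eps) by (apply Rdiv_lt_0_compat; lra).
  assert (Hpos : 0 <= INR n + 2 / eps) by (pose proof (pos_INR n); lra).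
  assert (Hsq : s xi n ^ 2 <= INR n + 2 / eps).
  { rewrite <- pow2_abs, <- (sqrt_sqrt _ Hpos); simpl; rewrite Rmult_1_r.
    pose proof (Rabs_s_in_play _ _ _ Heps A).
    apply Rmult_le_compat; auto using Rabs_pos. }
  assert (Hcancel : eps * (2 / eps) = 2) by (field; lra).
  nra.
Qed.

Lemma capital_P_eps_ge eps xi n : 0 < eps -> -1 <= capital (P_eps eps) xi n.
Proof.
  intros Heps; induction n as [|n IH]; [simpl; lra|].
  destruct (classic (in_play eps xi (S n))) as [A|NA].
  - rewrite (capital_in_play _ _ _ A); apply potential_in_play_ge; assumption.
  - simpl capital; rewrite (P_eps_out_of_play _ _ _ NA); lra.
Qed.

Lemma in_play_of_not_E3 eps xi n : ~ E3 eps xi -> in_play eps xi n.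
Proof.
  intros NE i Hi.
  apply Rnot_lt_le; intros Hlt; apply NE; left; exists (i - 1)%nat.
  rewrite <- S_INR, <- Nat.sub_succ_l, Nat.sub_succ, Nat.sub_0_r by lia.
  lra.
Qed.

Lemma frequently_bounded (u : nat -> R) :
  ~ (limsup_infty (fun n => Rabs (u n)) /\
     exists N : nat, forall n : nat, (N <= n)%nat -> u n <> 0) ->
  exists C, forall N, exists n, (N <= n)%nat /\ Rabs (u n) <= C.
Proof.
  intros H; apply not_and_or in H as [NL|NZ].
  - apply not_all_ex_not in NL as [C NL]; exists C; intros N.
    apply not_all_ex_not in NL as [N0 NL].
    exists (N + N0)%nat; split; [lia|].
    apply Rnot_lt_le; intros Hlt; apply NL; exists (N + N0)%nat; split; [lia|exact Hlt].
  - exists 0; intros N.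
    destruct (not_all_ex_not _ _ (not_ex_all_not _ _ NZ N)) as [n Hn].
    apply imply_to_and in Hn as [Hn Hz]; apply NNPP in Hz.
    exists n; split; [exact Hn|].
    rewrite Hz, Rabs_R0; lra.
Qed.

Lemma limsup_infty_potential eps (u : nat -> R) : 0 < eps ->
  (exists C, forall N, exists n, (N <= n)%nat /\ Rabs (u n) <= C) ->
  limsup_infty (potential eps u).
Proof.
  intros Heps [C0 HC] C N.
  destruct (INR_unbounded (2 * C / eps + C0 ^ 2)) as [M HM].
  destruct (HC (N + M)%nat) as [n [Hn Hb]].
  exists n; split; [lia|].
  assert (Hsq : u n ^ 2 <= C0 ^ 2).
  { rewrite <- pow2_abs; simpl; rewrite !Rmult_1_r.
    apply Rmult_le_compat; auto using Rabs_pos. }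
  assert (HI : INR M <= INR n) by (apply le_INR; lia).
  assert (Hcancel : eps * (2 * C / eps) = 2 * C) by (field; lra).
  unfold potential; nra.
Qed.

Theorem lemma3 (eps : R) (Heps : 0 < eps) :
  weakly_forces (P_eps eps) (E3 eps).
Proof.
  split; [apply P_eps_predictable|split].
  - intros xi n; apply capital_P_eps_ge, Heps.
  - intros xi NE.
    assert (Hcap : forall n, capital (P_eps eps) xi n = potential eps (s xi) n).
    { intros n; apply capital_in_play, in_play_of_not_E3, NE. }
    intros C N; destruct (limsup_infty_potential eps (s xi) Heps
                            (frequently_bounded (s xi) (fun H => NE (or_intror H))) C N)
      as [n Hn].
    exists n; rewrite Hcap; exact Hn.
Qed.
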